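(* There exists a convenient subspecies $\mathrm{Bool}_{\max}$ of $\mathrm{Bool}$ which is maximal for inclusion: for every convenient subspecies $\mathrm{Bool}_t$ and every finite set $X$, $\mathrm{Bool}_t(X)\subseteq\mathrm{Bool}_{\max}(X)$.
   Context: A boolean function on a finite set $X$ is a map $f:\mathcal{P}(X)\to\mathbb{Z}$ with $f(\emptyset)=0$; $\mathrm{Bool}(X)$ is their set; $f_{\mid Y}$ is the restriction to $\mathcal{P}(Y)$. For disjoint $X,Y$, $(f\star_1g)(A)=f(A\cap X)+g(A\cap Y)$ (associative, commutative, unit $1\in\mathrm{Bool}(\emptyset)$). For nonempty $X$, $f$ is indecomposable if $f=f'\star_1f''$ with $f'\in\mathrm{Bool}(X\setminus Y)$, $f''\in\mathrm{Bool}(Y)$ forces $Y\in\{\emptyset,X\}$. Each $f$ determines a unique equivalence $\sim_f^i$ with $f=\prod^{\star_1}_{Y\in X/\sim_f^i}f_{\mid Y}$ and each $f_{\mid Y}$ indecomposable; $\mathrm{ic}(f)=|X/\sim_f^i|$. For an equivalence $\sim$ on $X$: $\mathrm{cl}(\sim)=|X/{\sim}|$, $\varpi_\sim$ the canonical surjection, $f/{\sim}(A)=f(\varpi_\sim^{-1}(A))$, $(f\mid\sim)(A)=\sum_{Y\in X/\sim}f(A\cap Y)$. $\mathcal{E}^W(f)=\{\sim:\mathrm{ic}(f\mid\sim)=\mathrm{cl}(\sim)\}$ and $\mathcal{E}^S(f)=\{\sim\in\mathcal{E}^W(f):\mathrm{ic}(f/{\sim})=\mathrm{ic}(f)\}$.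 A convenient subspecies is an assignment $X\mapsto\mathrm{Bool}_t(X)\subseteq\mathrm{Bool}(X)$, stable under bijections ($f\mapsto f\circ\sigma^{-1}$), such that: $1\in\mathrm{Bool}_t(\emptyset)$; $f\star_1g\in\mathrm{Bool}_t(X\sqcup Y)$ for $f\in\mathrm{Bool}_t(X)$, $g\in\mathrm{Bool}_t(Y)$; $f_{\mid Y}\in\mathrm{Bool}_t(Y)$ for $f\in\mathrm{Bool}_t(X)$, $Y\subseteq X$; $f/{\sim}\in\mathrm{Bool}_t(X/{\sim})$ for $f\in\mathrm{Bool}_t(X)$, $\sim\in\mathcal{E}^W(f)$; and $\mathcal{E}^W(f)=\mathcal{E}^S(f)$ for all $f\in\mathrm{Bool}_t(X)$. *)

From HB Require Import structures.
From mathcomp Require Import all_boot all_order all_algebra.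
Set Implicit Arguments. Unset Strict Implicit. Unset Printing Implicit Defensive.
Import GRing.Theory Num.Theory.
Local Open Scope ring_scope.

(* Functions P(X) -> Z on a finite set X (a finType).  Membership in Bool(X)
   additionally requires f set0 = 0. *)
Definition boolfun (X : finType) := {set X} -> int.

(* f_{|Y} is indecomposable, where subsets of Y are viewed as subsets of X
   contained in Y.  A decomposition f_{|Y} = f' *_1 f'' with
   f' in Bool(Y\Z), f'' in Bool(Z) forces f' = f_{|Y\Z}, f'' = f_{|Z}. *)
Definition indecomposable_on (X : finType) (f : boolfun X) (Y : {set X}) : bool :=
  (Y != set0) &&
  [forall Z : {set X}, (Z \subset Y) ==>
     [forall A : {set X}, (A \subset Y) ==>
        (f A == f (A :&: (Y :\: Z)) + f (A :&: Z))] ==>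
     ((Z == set0) || (Z == Y))].

(* P is the (unique) partition of X into classes of ~_f^i:
   f = prod^{*_1}_{Y in P} f_{|Y} with every f_{|Y} indecomposable. *)
Definition is_idecomp (X : finType) (f : boolfun X) (P : {set {set X}}) : bool :=
  [&& partition P [set: X],
      [forall A : {set X}, f A == \sum_(Y in P) f (A :&: Y)] &
      [forall Y in P, indecomposable_on f Y]].

(* ic(f) = |X / ~_f^i|  (the decomposition exists and is unique) *)
Definition ic (X : finType) (f : boolfun X) : nat :=
  if [pick P | is_idecomp f P] is Some P then #|P| else 0%N.

(* An equivalence ~ on X is a boolean relation e with equivalence_rel e;
   X/~ is the set of its classes. *)
Definition classes (X : finType) (e : rel X) : {set {set X}} :=
  equivalence_partition e [set: X].

Definition cl (X : finType) (e : rel X) : nat := #|classes e|.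

Definition quot (X : finType) (e : rel X) : finType :=
  {C : {set X} | C \in classes e}.

(* f/~ (A) = f(varpi^{-1}(A)), and varpi^{-1}(A) is the union of the classes in A *)
Definition quot_fun (X : finType) (f : boolfun X) (e : rel X) : boolfun (quot e) :=
  fun A => f (\bigcup_(C in A) val C).
Arguments quot_fun {X} f e _.

Definition restr_fun (X : finType) (f : boolfun X) (e : rel X) : boolfun X :=
  fun A => \sum_(Y in classes e) f (A :&: Y).

Definition EW (X : finType) (f : boolfun X) (e : rel X) : Prop :=
  equivalence_rel e /\ ic (restr_fun f e) = cl e.

Definition ES (X : finType) (f : boolfun X) (e : rel X) : Prop :=
  EW f e /\ ic (quot_fun f e) = ic f.

Definition subspecies := forall X : finType, boolfun X -> Prop.

Definition convenient (Bt : subspecies) : Prop :=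
  [/\ (* Bool_t(X) is a subset of Bool(X) *)
      (forall (X : finType) (f : boolfun X), Bt X f -> f set0 = 0),
      (forall (X Y : finType) (s : X -> Y), bijective s ->
         forall f : boolfun X, Bt X f -> Bt Y (fun B => f (s @^-1: B))),
      (* 1 in Bool_t(emptyset) *)
      Bt void (fun _ => 0),
      (* closed under *_1 on disjoint unions *)
      (forall (X Y : finType) (f : boolfun X) (g : boolfun Y),
         Bt X f -> Bt Y g ->
         Bt (X + Y)%type (fun A => f (inl @^-1: A) + g (inr @^-1: A))) &
      [/\
         (forall (X : finType) (f : boolfun X) (Y : {set X}),
            Bt X f -> Bt {y : X | y \in Y} (fun B => f (val @: B))),
         (forall (X : finType) (f : boolfun X) (e : rel X),
            Bt X f -> EW f e -> Bt (quot e) (quot_fun f e)) &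
         (forall (X : finType) (f : boolfun X) (e : rel X),
            Bt X f -> (EW f e <-> ES f e))]].

(* Take for Bool_max(X) the functions lying in some convenient subspecies.
   All closure properties except the product pass directly to this union.  For
   f in B1(X) and g in B2(Y), the product f *_1 g lies in the "sum" of B1 and
   B2: the functions h with h = h_{|U} *_1 h_{|~U}, h_{|U} in B1 and h_{|~U} in
   B2 up to relabelling.  This sum is again convenient.  The key facts are that
   ~ is in E^W(h) exactly when every class of ~ is h-indecomposable (the
   indecomposable decomposition of h | ~ refines X/~ and has as many blocks), so
   each class lies on one side of U and the quotient h/~ splits along the
   classes inside U; and that ic is additive along such splittings, which
   reduces E^W = E^S for h to the same property in B1 and B2. *)

From mathcomp Require Import all_boot all_order all_algebra.
Set Implicit Arguments. Unset Strict Implicit. Unset Printing Implicit Defensive.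
Import GRing.Theory Num.Theory.
Local Open Scope ring_scope.

Section InjectiveImage.
Variables (aT rT : finType) (g : aT -> rT).

Lemma imsetI_preimset (A : {set aT}) (U : {set rT}) :
  g @: (A :&: g @^-1: U) = g @: A :&: U.
Proof.
apply/setP => z; apply/imsetP/setIP => [[x /setIP [xA] /[!inE] xU ->]|[/imsetP[x xA ->] xU]].
  by split => //; apply: imset_f.
by exists x => //; rewrite !inE xA.
Qed.

Lemma preimsetK (A : {set rT}) : A \subset g @: setT -> g @: (g @^-1: A) = A.
Proof. by move=> sA; rewrite -[g @^-1: A]setTI imsetI_preimset (setIidPr sA). Qed.

Hypothesis g_inj : injective g.

Lemma imsetK (A : {set aT}) : g @^-1: (g @: A) = A.
Proof. by apply/setP => x; rewrite inE mem_imset. Qed.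

Lemma imsetD_inj (A B : {set aT}) : g @: (A :\: B) = g @: A :\: g @: B.
Proof.
apply/setP => z; rewrite inE.
apply/imsetP/andP => [[x /setDP [xA xB] ->]|[zB /imsetP[x xA zE]]].
  by rewrite !mem_imset.
by exists x => //; rewrite inE xA -(mem_imset B x g_inj) -zE zB.
Qed.

Lemma imsetI_inj (A B : {set aT}) : g @: (A :&: B) = g @: A :&: g @: B.
Proof. by apply: imsetI => x y _ _; apply: g_inj. Qed.

End InjectiveImage.

Section Decomposition.
Variable X : finType.
Implicit Types (f g : boolfun X) (U Y Z A : {set X}) (P Q : {set {set X}}).

Definition splits_on f Y Z :=
  forall A, A \subset Y -> f A = f (A :&: (Y :\: Z)) + f (A :&: Z).

Lemma indecomposableP f Y :
  reflect (Y != set0 /\ forall Z, Z \subset Y -> splits_on f Y Z -> Z = set0 \/ Z = Y)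
          (indecomposable_on f Y).
Proof.
apply: (iffP andP) => -[nY trivY]; split => //.
  move=> Z sZ spl; have /implyP/(_ sZ)/implyP := forallP trivY Z.
  case/(_ _)/orP => [|/eqP|/eqP]; [|by left|by right].
  by apply/forallP => A; apply/implyP => sA; apply/eqP; exact: spl.
apply/forallP => Z; apply/implyP => sZ; apply/implyP => /forallP HA.
have spl : splits_on f Y Z by move=> A sA; apply/eqP/(implyP (HA A)).
by case: (trivY Z sZ spl) => ->; rewrite eqxx ?orbT.
Qed.

Lemma indecomposablePn f Y : Y != set0 -> ~~ indecomposable_on f Y ->
  exists Z, [/\ Z \subset Y, splits_on f Y Z, Z != set0 & Z != Y].
Proof.
rewrite /indecomposable_on => -> /= /forallPn [Z].
rewrite !negb_imply negb_or => /and3P [sZ /forallP HA /andP [nZ nZY]].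
by exists Z; split => // A sA; apply/eqP/(implyP (HA A)).
Qed.

Lemma eq_indecomposable_on f g Y : (forall A, A \subset Y -> f A = g A) ->
  indecomposable_on f Y = indecomposable_on g Y.
Proof.
move=> eqfg; congr (_ && _); apply: eq_forallb => Z.
congr (_ ==> (_ ==> _)); apply: eq_forallb => A.
case sA: (A \subset Y) => //=.
by rewrite !eqfg // (subset_trans (subsetIl _ _) sA).
Qed.

Definition idecomp f U P := [&& partition P U,
  [forall A : {set X}, (A \subset U) ==> (f A == \sum_(Y in P) f (A :&: Y))] &
  [forall Y in P, indecomposable_on f Y]].

Lemma idecompP f U P : reflect [/\ partition P U,
   forall A, A \subset U -> f A = \sum_(Y in P) f (A :&: Y) &
   forall Y, Y \in P -> indecomposable_on f Y] (idecomp f U P).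
Proof.
apply: (iffP and3P) => -[pP hA hY]; split => //.
- by move=> A sA; apply/eqP/(implyP (forallP hA A)).
- by move=> Y YP; apply: (implyP (forallP hY Y)).
- by apply/forallP => A; apply/implyP => sA; apply/eqP; apply: hA.
- by apply/forallP => Y; apply/implyP; apply: hY.
Qed.

Definition ic_on f U := if [pick P | idecomp f U P] is Some P then #|P| else 0%N.

Section Additive.
Variable f : boolfun X.
Hypothesis f0 : f set0 = 0.

Lemma indecomposable_sub_block U Q Y : partition Q U ->
    (forall A, A \subset U -> f A = \sum_(C in Q) f (A :&: C)) ->
    indecomposable_on f Y -> Y \subset U ->
  exists2 C, C \in Q & Y \subset C.
Proof.
move=> pQ hQ /indecomposableP [nY iY] sYU.
have [y yY] := set0Pn _ nY.
have yQ : y \in cover Q by rewrite (cover_partition pQ) (subsetP sYU).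
set C := pblock Q y; have CQ : C \in Q := pblock_mem yQ.
exists C => //.
have splC : splits_on f Y (Y :&: C).
  move=> A sA; have sAU := subset_trans sA sYU.
  have -> : A :&: (Y :&: C) = A :&: C by rewrite setIA (setIidPl sA).
  have -> : A :&: (Y :\: (Y :&: C)) = A :\: C.
    by rewrite setDIr setDv set0U setIDA (setIidPl sA).
  rewrite [f A]hQ // [f (A :\: C)]hQ ?(subset_trans (subsetDl _ _)) //.
  rewrite !(bigD1 C CQ) /= setIDAC setDIl setDv setI0 f0 add0r addrC.
  congr (_ + _).
  apply: eq_bigr => C' /andP [C'Q neqC]; congr (f _).
  have dCC' := trivIsetP (partition_trivIset pQ) _ _ C'Q CQ neqC.
  by rewrite setIDAC; apply/esym/setDidPl; apply: disjointWl dCC'; apply: subsetIr.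
have [/setP/(_ y)|/setIidPl //] := iY _ (subsetIl _ _) splC.
by rewrite !inE yY mem_pblock yQ.
Qed.

Lemma idecomp_uniq U P Q : idecomp f U P -> idecomp f U Q -> P = Q.
Proof.
suff sub P1 P2 : idecomp f U P1 -> idecomp f U P2 -> P1 \subset P2.
  by move=> hP hQ; apply/eqP; rewrite eqEsubset !sub.
move=> /idecompP [pP1 hP1 iP1] /idecompP [pP2 hP2 iP2]; apply/subsetP => Y YP1.
have [C CP2 sYC] := indecomposable_sub_block pP2 hP2 (iP1 _ YP1) (partitionS pP1 YP1).
have [Y' Y'P1 sCY'] :=
  indecomposable_sub_block pP1 hP1 (iP2 _ CP2) (partitionS pP2 CP2).
suff eYY' : Y = Y' by rewrite (_ : Y = C) //; apply/eqP; rewrite eqEsubset sYC eYY'.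
apply/eqP; apply: contraT => neqYY'.
have /disjoint_setI0 := trivIsetP (partition_trivIset pP1) _ _ YP1 Y'P1 neqYY'.
by rewrite (setIidPl (subset_trans sYC sCY')) => /eqP; rewrite (negbTE (partition_neq0 pP1 YP1)).
Qed.

Lemma ic_onE U P : idecomp f U P -> ic_on f U = #|P|.
Proof.
move=> hP; rewrite /ic_on; case: pickP => [Q hQ|/(_ P)]; last by rewrite hP.
by rewrite (idecomp_uniq hQ hP).
Qed.

Lemma idecompU U1 U2 P1 P2 : [disjoint U1 & U2] ->
    (forall A, A \subset U1 :|: U2 -> f A = f (A :&: U1) + f (A :&: U2)) ->
    idecomp f U1 P1 -> idecomp f U2 P2 ->
  idecomp f (U1 :|: U2) (P1 :|: P2) /\ #|P1 :|: P2| = (#|P1| + #|P2|)%N.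
Proof.
move=> dU12 splU /idecompP [pP1 hP1 iP1] /idecompP [pP2 hP2 iP2].
have dP12 : P1 :&: P2 = set0.
  apply/setP => Y; rewrite !inE; apply/negbTE/andP => -[YP1 YP2].
  have : Y \subset U1 :&: U2 by rewrite subsetI (partitionS pP1) ?(partitionS pP2).
  by rewrite (disjoint_setI0 dU12) subset0; apply/negP/(partition_neq0 pP1 YP1).
split; last by rewrite cardsU dP12 cards0 subn0.
apply/idecompP; split.
- apply/and3P; split.
  + by rewrite /cover bigcup_setU -!/(cover _) (cover_partition pP1) (cover_partition pP2).
  + apply: trivIsetU; rewrite ?(partition_trivIset pP1) ?(partition_trivIset pP2) //.
    by rewrite (cover_partition pP1) (cover_partition pP2).
  + by rewrite inE (partition0 pP1) (partition0 pP2).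
- move=> A sA; rewrite splU // (big_setID P1) setUK setDUl setDv set0U.
  have -> : P2 :\: P1 = P2 by apply/setDidPl; rewrite -setI_eq0 setIC dP12.
  rewrite hP1 ?subsetIr // hP2 ?subsetIr //.
  by congr (_ + _); apply: eq_bigr => Y YP; rewrite -setIA (setIidPr (partitionS _ YP)).
- by move=> Y /setUP[]; [apply: iP1 | apply: iP2].
Qed.

Lemma idecomp_exists U : exists P, idecomp f U P.
Proof.
elim: {U}_.+1 {-2}U (ltnSn #|U|) => // n IH U ltUn.
have [->|nU] := eqVneq U set0.
  exists set0; apply/idecompP; split; first by rewrite partition_set0.
    by move=> A; rewrite subset0 => /eqP ->; rewrite big_set0.
  by move=> Y; rewrite inE.
have [iU|/(indecomposablePn nU)[Z [sZU splZ nZ nZU]]] := boolP (indecomposable_on f U).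
  exists [set U]; apply/idecompP; split.
  - by rewrite /partition cover1 trivIset1 eqxx inE eq_sym nU.
  - by move=> A sA; rewrite big_set1 (setIidPl sA).
  - by move=> Y /set1P ->.
have ltZU : (#|Z| < #|U|)%N by apply: proper_card; rewrite properEneq nZU.
have ltDU : (#|U :\: Z| < #|U|)%N.
  by rewrite cardsDS // ltn_subrL card_gt0 nZ (leq_ltn_trans _ ltZU).
have [P1 h1] := IH _ (leq_trans ltDU ltUn); have [P2 h2] := IH _ (leq_trans ltZU ltUn).
have eU : (U :\: Z) :|: Z = U.
  apply/setP => x; rewrite !inE.
  by case: (boolP (x \in Z)) => [/(subsetP sZU) ->|]; rewrite ?orbT ?orbF.
have dDZ : [disjoint U :\: Z & Z] by rewrite -setI_eq0 setIDAC setDIl setDv setI0.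
have splU : forall A, A \subset (U :\: Z) :|: Z -> f A = f (A :&: (U :\: Z)) + f (A :&: Z).
  by rewrite eU; apply: splZ.
have [hU _] := idecompU dDZ splU h1 h2.
by exists (P1 :|: P2); rewrite -eU.
Qed.

End Additive.
End Decomposition.

Lemma ic_setT (X : finType) (f : boolfun X) : ic f = ic_on f setT.
Proof.
rewrite /ic /ic_on (eq_pick (_ : _ =1 idecomp f setT)) // => P.
by congr [&& _, _ & _]; apply: eq_forallb => A; rewrite subsetT.
Qed.

Definition splits (X : finType) (f : boolfun X) (U : {set X}) :=
  forall A, f A = f (A :&: U) + f (A :&: ~: U).

Section Splits.
Variables (X : finType) (f : boolfun X) (U : {set X}).
Hypothesis splU : splits f U.

Lemma splits_set0 : f set0 = 0.
Proof. by move: (splU set0); rewrite !set0I -{1}[f set0]addr0 => /addrI <-. Qed.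

Lemma ic_on_splits : ic_on f setT = (ic_on f U + ic_on f (~: U))%N.
Proof.
have f0 := splits_set0.
have [P1 h1] := idecomp_exists f0 U; have [P2 h2] := idecomp_exists f0 (~: U).
have dUC : [disjoint U & ~: U] by rewrite -setI_eq0 setICr.
have [h12 card12] := idecompU dUC (fun A _ => splU A) h1 h2.
by rewrite -(setUCr U) (ic_onE f0 h12) (ic_onE f0 h1) (ic_onE f0 h2).
Qed.

End Splits.

Lemma partition_refinement_eq (T : finType) (D : {set T}) (P Q : {set {set T}}) :
    partition P D -> partition Q D ->
    (forall Y, Y \in P -> exists2 C, C \in Q & Y \subset C) ->
  (#|P| <= #|Q|)%N -> P = Q.
Proof.
move=> pP pQ refPQ lePQ.
have tQ := partition_trivIset pQ.
have coverP x : x \in D -> x \in cover P by rewrite (cover_partition pP).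
have coverQ x : x \in D -> x \in cover Q by rewrite (cover_partition pQ).
have sub_pblock x : x \in D -> pblock P x \subset pblock Q x.
  move=> xD; have [C CQ sYC] := refPQ _ (pblock_mem (coverP x xD)).
  by rewrite (def_pblock tQ CQ (subsetP sYC x _)) // mem_pblock coverP.
pose coarse (Y : {set T}) := \bigcup_(y in Y) pblock Q y.
have coarseE x : x \in D -> coarse (pblock P x) = pblock Q x.
  move=> xD; apply/setP => z; apply/bigcupP/idP => [[y yPx]|zQx].
    by rewrite (def_pblock tQ (pblock_mem (coverQ x xD)) (subsetP (sub_pblock x xD) y yPx)).
  by exists x; rewrite // mem_pblock coverP.
have imP : coarse @: P = Q.
  apply/setP => C; apply/imsetP/idP => [[Y YP ->]|CQ].
    have [x xY] := set0Pn _ (partition_neq0 pP YP).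
    have xD := subsetP (partitionS pP YP) x xY.
    by rewrite -(def_pblock (partition_trivIset pP) YP xY) coarseE // pblock_mem ?coverQ.
  have [x xC] := set0Pn _ (partition_neq0 pQ CQ).
  have xD := subsetP (partitionS pQ CQ) x xC.
  exists (pblock P x); first by rewrite pblock_mem ?coverP.
  by rewrite coarseE // (def_pblock tQ CQ xC).
have /imset_injP coarse_inj : #|coarse @: P| == #|P|.
  by rewrite eqn_leq leq_imset_card imP.
suff sQP : Q \subset P by apply/eqP; rewrite eq_sym eqEcard sQP.
apply/subsetP => C CQ.
have [x xC] := set0Pn _ (partition_neq0 pQ CQ).
have xD := subsetP (partitionS pQ CQ) x xC.
have eC : pblock Q x = C := def_pblock tQ CQ xC.
suff -> : C = pblock P x by rewrite pblock_mem ?coverP.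
apply/eqP; rewrite eqEsubset -{2}eC sub_pblock // andbT.
apply/subsetP => z zC; have zD := subsetP (partitionS pQ CQ) z zC.
suff <- : pblock P z = pblock P x by rewrite mem_pblock coverP.
apply: coarse_inj; rewrite ?pblock_mem ?coverP //.
by rewrite !coarseE // eC (def_pblock tQ CQ zC).
Qed.

Section WeakEquivalences.
Variables (X : finType) (f : boolfun X) (e : rel X).
Hypotheses (f0 : f set0 = 0) (eqv_e : equivalence_rel e).

Lemma classes_partition : partition (classes e) setT.
Proof. by apply: equivalence_partitionP => x y z _ _ _; apply: eqv_e. Qed.

Lemma restr_fun_local (C A : {set X}) : C \in classes e -> A \subset C -> restr_fun f e A = f A.
Proof.
move=> CQ sAC; rewrite /restr_fun (bigD1 C CQ) /= (setIidPl sAC) big1 ?addr0 //.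
move=> C' /andP [C'Q neqC].
have dC'C := trivIsetP (partition_trivIset classes_partition) _ _ C'Q CQ neqC.
by rewrite setIC (disjoint_setI0 (disjointWr sAC dC'C)).
Qed.

Lemma restr_fun0 : restr_fun f e set0 = 0.
Proof. by rewrite /restr_fun big1 // => C _; rewrite set0I f0. Qed.

Lemma restr_fun_sum A : restr_fun f e A = \sum_(C in classes e) restr_fun f e (A :&: C).
Proof. by apply: eq_bigr => C CQ; rewrite (restr_fun_local CQ) ?subsetIr. Qed.

Lemma indecomposable_restr_fun C : C \in classes e ->
  indecomposable_on (restr_fun f e) C = indecomposable_on f C.
Proof. by move=> CQ; apply: eq_indecomposable_on => A; apply: restr_fun_local. Qed.

Lemma EWP : EW f e <-> {in classes e, forall C, indecomposable_on f C}.
Proof.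
set g := restr_fun f e; have g0 : g set0 = 0 := restr_fun0.
have sum_g (A : {set X}) : A \subset setT -> g A = \sum_(C in classes e) g (A :&: C).
  by move=> _; apply: restr_fun_sum.
split=> [[_ icE] C CQ|indecC].
  have [P /[dup] hP /idecompP [pP _ iP]] := idecomp_exists g0 setT.
  have refP Y : Y \in P -> exists2 C, C \in classes e & Y \subset C.
    move=> YP; have indY := iP Y YP.
    by apply: (indecomposable_sub_block g0 classes_partition sum_g indY (subsetT Y)).
  have eP : P = classes e.
    apply: partition_refinement_eq pP classes_partition refP _.
    by rewrite -(ic_onE g0 hP) -ic_setT icE.
  by rewrite -indecomposable_restr_fun // iP ?eP.
split=> //; rewrite ic_setT (@ic_onE _ g g0 setT (classes e)) //.
apply/idecompP; split=> // [|C CQ]; first exact: classes_partition.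
by rewrite indecomposable_restr_fun ?indecC.
Qed.

End WeakEquivalences.

Section Transport.
Variables (X Z : finType) (phi : X -> Z) (f : boolfun X) (h : boolfun Z).
Hypotheses (phi_inj : injective phi) (fE : forall B, f B = h (phi @: B)).

Lemma splits_on_transport Y W : splits_on f Y W <-> splits_on h (phi @: Y) (phi @: W).
Proof.
have imD := imsetD_inj phi_inj; have imI := imsetI_inj phi_inj.
split=> splYW A sA; last by rewrite !fE splYW ?imsetS // !imI imD.
have sAT : A \subset phi @: setT by apply: subset_trans sA (imsetS _ (subsetT Y)).
have sBY : phi @^-1: A \subset Y by rewrite -(imsetK phi_inj Y) preimsetS.
by rewrite -(preimsetK sAT) -fE splYW // !fE !imI imD.
Qed.

Lemma indecomposable_transport Y : indecomposable_on f Y = indecomposable_on h (phi @: Y).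
Proof.
apply/indecomposableP/indecomposableP => -[nY indY]; split.
- by rewrite imset_eq0.
- move=> W sWY.
  have sWT : W \subset phi @: setT by apply: subset_trans sWY (imsetS _ (subsetT Y)).
  have sBY : phi @^-1: W \subset Y by rewrite -(imsetK phi_inj Y) preimsetS.
  rewrite -(preimsetK sWT) => /splits_on_transport/(indY _ sBY)[]->.
    by left; rewrite imset0.
  by right.
- by rewrite -(imset_eq0 phi).
- move=> W sWY /splits_on_transport /(indY _ (imsetS _ sWY)) [/eqP|/(imset_inj phi_inj)].
    by rewrite imset_eq0 => /eqP; left.
  by right.
Qed.

Lemma ic_transport : h set0 = 0 -> ic f = ic_on h (phi @: setT).
Proof.
move=> h0; have f0 : f set0 = 0 by rewrite fE imset0.
have [P /[dup] hP /idecompP [pP sumP indP]] := idecomp_exists f0 setT.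
have phiP : idecomp h (phi @: setT) [set phi @: (Y : {set X}) | Y in P].
  apply/idecompP; split.
  - by rewrite imset_partition.
  - move=> A sA; rewrite -(preimsetK sA) -fE sumP ?subsetT // big_imset /=.
      by apply: eq_bigr => Y _; rewrite fE (imsetI_inj phi_inj).
    by move=> Y1 Y2 _ _; apply: imset_inj.
  - by move=> _ /imsetP [Y YP ->]; rewrite -indecomposable_transport indP.
rewrite ic_setT (ic_onE f0 hP) (ic_onE h0 phiP) card_imset //.
exact: imset_inj.
Qed.

End Transport.

Lemma classesP (X : finType) (e : rel X) (C : {set X}) :
  reflect (exists x, C = [set y | e x y]) (C \in classes e).
Proof.
apply: (iffP imsetP) => -[x]; [move=> _ ->|move=> ->]; exists x; rewrite ?inE //.
all: by apply/setP => y; rewrite !inE.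
Qed.

Lemma class_mem (X : finType) (e : rel X) x : [set y | e x y] \in classes e.
Proof. by apply/classesP; exists x. Qed.

Section QuotientTransport.
Variables (X Z : finType) (phi : X -> Z) (f : boolfun X) (h : boolfun Z) (e : rel Z).
Hypotheses (phi_inj : injective phi) (fE : forall B, f B = h (phi @: B)).
Hypothesis eqv_e : equivalence_rel e.
Hypothesis range_closed : forall x z, e (phi x) z -> z \in phi @: setT.

Definition pullback_rel : rel X := fun x y => e (phi x) (phi y).

Lemma pullback_equivalence : equivalence_rel pullback_rel.
Proof. by move=> x y z; apply: eqv_e. Qed.

Lemma imset_pullback_class x : phi @: [set y | pullback_rel x y] = [set z | e (phi x) z].
Proof.
apply/setP => z; rewrite inE; apply/imsetP/idP => [[y /[!inE] exy ->] //|ez].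
by have /imsetP [y _ zy] := range_closed ez; exists y; rewrite // inE /pullback_rel -zy.
Qed.

Lemma imset_classes_mem (D : quot pullback_rel) : phi @: val D \in classes e.
Proof. by have /classesP [x ->] := valP D; rewrite imset_pullback_class class_mem. Qed.

Definition quot_map (D : quot pullback_rel) : quot e :=
  exist (fun C => C \in classes e) _ (imset_classes_mem D).

Lemma quot_map_inj : injective quot_map.
Proof. by move=> D1 D2 /(congr1 val) /(imset_inj phi_inj) /val_inj. Qed.

Lemma quot_map_range : quot_map @: setT = [set C : quot e | val C \subset phi @: setT].
Proof.
apply/setP => C; rewrite inE; apply/imsetP/idP => [[D _ ->]|sCT].
  by rewrite imsetS ?subsetT.
have /classesP [z Cz] := valP C.
have /imsetP [x _ zx] : z \in phi @: setT.
  by apply: (subsetP sCT); rewrite Cz inE; have [] := eqv_e z z z.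
exists (exist (fun D => D \in classes pullback_rel) _ (class_mem pullback_rel x)) => //.
apply: val_inj.
by rewrite /= imset_pullback_class Cz zx.
Qed.

Lemma quot_fun_transport B : quot_fun f pullback_rel B = quot_fun h e (quot_map @: B).
Proof.
rewrite /quot_fun fE; congr (h _); apply/setP => z.
apply/imsetP/bigcupP => [[x /bigcupP [D DB xD] ->]|[_ /imsetP [D DB ->] /imsetP [x xD ->]]].
  by exists (quot_map D); rewrite ?imset_f.
by exists x => //; apply/bigcupP; exists D.
Qed.

Lemma EW_pullback : h set0 = 0 -> EW h e -> EW f pullback_rel.
Proof.
move=> h0 /(EWP h0 eqv_e) indec.
have f0 : f set0 = 0 by rewrite fE imset0.
apply/(EWP f0 pullback_equivalence) => _ /classesP [x ->].
by rewrite (indecomposable_transport phi_inj fE) imset_pullback_class indec ?class_mem.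
Qed.

End QuotientTransport.

Definition star1 (X Y : finType) (f : boolfun X) (g : boolfun Y) : boolfun (X + Y)%type :=
  fun A => f (inl @^-1: A) + g (inr @^-1: A).

Definition sum_map (X1 X2 Z1 Z2 : Type) (p1 : X1 -> Z1) (p2 : X2 -> Z2)
    (s : X1 + X2) : Z1 + Z2 :=
  match s with inl x => inl (p1 x) | inr y => inr (p2 y) end.

Lemma sum_map_inj (X1 X2 Z1 Z2 : Type) (p1 : X1 -> Z1) (p2 : X2 -> Z2) :
  injective p1 -> injective p2 -> injective (sum_map p1 p2).
Proof. by move=> inj1 inj2 [x|x] [y|y] //= [] => [/inj1|/inj2] ->. Qed.

Lemma preimset_inl_sum_map (X1 X2 Z1 Z2 : finType) (p1 : X1 -> Z1) (p2 : X2 -> Z2)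
    (B : {set X1 + X2}) :
  inl @^-1: (sum_map p1 p2 @: B) = p1 @: (inl @^-1: B).
Proof.
apply/setP => z; rewrite inE; apply/imsetP/imsetP => [[[x|y] xB //= [->]]|[x xB ->]].
  by exists x; rewrite ?inE.
by exists (inl x); move: xB; rewrite // inE.
Qed.

Lemma preimset_inr_sum_map (X1 X2 Z1 Z2 : finType) (p1 : X1 -> Z1) (p2 : X2 -> Z2)
    (B : {set X1 + X2}) :
  inr @^-1: (sum_map p1 p2 @: B) = p2 @: (inr @^-1: B).
Proof.
apply/setP => z; rewrite inE; apply/imsetP/imsetP => [[[x|y] xB //= [->]]|[y yB ->]].
  by exists y; rewrite ?inE.
by exists (inr y); move: yB; rewrite // inE.
Qed.

Lemma imset_sum_map (X1 X2 Z1 Z2 : finType) (p1 : X1 -> Z1) (p2 : X2 -> Z2) :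
  sum_map p1 p2 @: setT = inl @: (p1 @: setT) :|: inr @: (p2 @: setT).
Proof.
apply/setP => -[z|z]; rewrite inE; apply/imsetP/orP.
- by move=> [[x|x] _ //= [->]]; left; rewrite !imset_f.
- by move=> [/imsetP [_ /imsetP [x _ ->] [->]]|/imsetP [? _ //]]; exists (inl x).
- by move=> [[x|x] _ //= [->]]; right; rewrite !imset_f.
- by move=> [/imsetP [? _ //]|/imsetP [_ /imsetP [x _ ->] [->]]]; exists (inr x).
Qed.

Definition restriction_in (Bt : subspecies) (Z : finType) (h : boolfun Z) (U : {set Z}) :=
  exists (X : finType) (f : boolfun X) (phi : X -> Z),
    [/\ Bt X f, injective phi, phi @: setT = U & forall B, f B = h (phi @: B)].

Section RestrictionIn.
Variable Bt : subspecies.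
Hypothesis Bt_conv : convenient Bt.

Lemma restriction_in_void (U : {set void}) : restriction_in Bt (fun _ => 0) U.
Proof.
have [_ _ Bt_void _ _] := Bt_conv.
by exists void, (fun _ => 0), id; split => //; apply/setP => -[].
Qed.

Lemma restriction_in_bij (Z Z' : finType) (s : Z -> Z') (h : boolfun Z) U :
  bijective s -> restriction_in Bt h U -> restriction_in Bt (fun B => h (s @^-1: B)) (s @: U).
Proof.
move=> /bij_inj s_inj [X [f [phi [Bf phi_inj phiT fE]]]].
exists X, f, (s \o phi); split => //.
- exact: inj_comp s_inj phi_inj.
- by rewrite imset_comp phiT.
- by move=> B; rewrite imset_comp imsetK.
Qed.

Lemma restriction_in_star1 (Z1 Z2 : finType) (h1 : boolfun Z1) (h2 : boolfun Z2) U1 U2 :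
    restriction_in Bt h1 U1 -> restriction_in Bt h2 U2 ->
  restriction_in Bt (star1 h1 h2) (inl @: U1 :|: inr @: U2).
Proof.
move=> [X1 [f1 [p1 [Bf1 inj1 pT1 fE1]]]] [X2 [f2 [p2 [Bf2 inj2 pT2 fE2]]]].
have [_ _ _ Bt_star1 _] := Bt_conv.
exists (X1 + X2)%type, (star1 f1 f2), (sum_map p1 p2); split.
- exact: Bt_star1.
- exact: sum_map_inj.
- by rewrite imset_sum_map pT1 pT2.
- by move=> B; rewrite /star1 preimset_inl_sum_map preimset_inr_sum_map fE1 fE2.
Qed.

Lemma restriction_in_sub (Z : finType) (h : boolfun Z) U (Y : {set Z}) :
  restriction_in Bt h U ->
  restriction_in Bt (fun B : {set {y : Z | y \in Y}} => h (val @: B)) (val @^-1: U).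
Proof.
move=> [X [f [phi [Bf phi_inj phiT fE]]]].
have [_ _ _ _ [Bt_sub _ _]] := Bt_conv.
pose X' := {x : X | x \in phi @^-1: Y}.
have memY (x : X') : phi (val x) \in Y by have := valP x; rewrite inE.
pose phi' (x : X') : {y : Z | y \in Y} := exist _ (phi (val x)) (memY x).
exists X', (fun B : {set X'} => f (val @: B)), phi'; split.
- exact: Bt_sub.
- by move=> x1 x2 /(congr1 val) /phi_inj /val_inj.
- apply/setP => y; rewrite inE -phiT; apply/imsetP/imsetP => [[x _ ->]|[x _ yx]].
    by exists (val x).
  have xY : x \in phi @^-1: Y by rewrite inE -yx (valP y).
  by exists (exist _ x xY) => //; apply: val_inj.
- by move=> B; rewrite fE -!imset_comp; congr (h _); apply: eq_imset.
Qed.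

Lemma restriction_in_quot (Z : finType) (h : boolfun Z) (e : rel Z) (U : {set Z}) :
    h set0 = 0 -> EW h e -> (forall C, C \in classes e -> C \subset U \/ C \subset ~: U) ->
    restriction_in Bt h U ->
  restriction_in Bt (quot_fun h e) [set C : quot e | val C \subset U] /\
  ic_on (quot_fun h e) [set C : quot e | val C \subset U] = ic_on h U.
Proof.
move=> h0 ewe side [X [f [phi [Bf phi_inj phiT fE]]]].
have [_ _ _ _ [_ Bt_quot Bt_ES]] := Bt_conv.
have eqv_e := ewe.1.
have range_closed x z : e (phi x) z -> z \in phi @: setT.
  move=> ez; rewrite phiT.
  have [sC|sC] := side _ (class_mem e (phi x)); first by apply: (subsetP sC); rewrite inE.
  have [e_refl _] := eqv_e (phi x) (phi x) (phi x).
  by have := subsetP sC (phi x); rewrite !inE e_refl -phiT imset_f // => /(_ isT).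
have ew1 := EW_pullback phi_inj fE eqv_e range_closed h0 ewe.
have q0 : quot_fun h e set0 = 0 by rewrite /quot_fun big_set0.
have qE := quot_fun_transport fE range_closed.
rewrite -phiT -(quot_map_range eqv_e range_closed); split.
  by exists _, (quot_fun f (pullback_rel phi e)), (quot_map range_closed); split;
    [exact: Bt_quot | exact: quot_map_inj | |].
rewrite -(ic_transport (quot_map_inj phi_inj (range_closed := range_closed)) qE q0).
rewrite -(ic_transport phi_inj fE h0).
by have [_ ->] := (Bt_ES _ _ _ Bf).1 ew1.
Qed.

End RestrictionIn.

Section SumSets.
Variables X Y : finType.
Implicit Types (U : {set X}) (V : {set Y}) (A : {set X + Y}).

Lemma inl_in_imset_inr V x : (inl x \in (@inr X Y) @: V) = false.
Proof. by apply/imsetP => -[]. Qed.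

Lemma inr_in_imset_inl U y : (inr y \in (@inl X Y) @: U) = false.
Proof. by apply/imsetP => -[]. Qed.

Lemma inl_in_imset_inl U x : (inl x \in (@inl X Y) @: U) = (x \in U).
Proof. exact: mem_imset inl_inj. Qed.

Lemma inr_in_imset_inr V y : (inr y \in (@inr X Y) @: V) = (y \in V).
Proof. exact: mem_imset inr_inj. Qed.

Let memE := (inl_in_imset_inl, inr_in_imset_inr, inl_in_imset_inr, inr_in_imset_inl).

Lemma setC_sum U V : ~: (inl @: U :|: inr @: V) = inl @: (~: U) :|: inr @: (~: V).
Proof. by apply/setP => -[x|y]; rewrite !inE !memE ?inE ?orbF. Qed.

Lemma preimset_inl_sum A U V : inl @^-1: (A :&: (inl @: U :|: inr @: V)) = inl @^-1: A :&: U.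
Proof. by apply/setP => x; rewrite !inE !memE orbF. Qed.

Lemma preimset_inr_sum A U V : inr @^-1: (A :&: (inl @: U :|: inr @: V)) = inr @^-1: A :&: V.
Proof. by apply/setP => y; rewrite !inE !memE. Qed.

Lemma splits_star1 (f : boolfun X) (g : boolfun Y) U V :
  splits f U -> splits g V -> splits (star1 f g) (inl @: U :|: inr @: V).
Proof.
move=> splU splV A; rewrite /star1 setC_sum !preimset_inl_sum !preimset_inr_sum.
by rewrite {1}splU {1}splV addrACA.
Qed.

Lemma restriction_in_inl (Bt : subspecies) (f : boolfun X) (g : boolfun Y) :
  Bt X f -> g set0 = 0 -> restriction_in Bt (star1 f g) (inl @: setT).
Proof.
move=> Bf g0; exists X, f, inl; split => // [|B]; first exact: inl_inj.
rewrite /star1 imsetK; last exact: inl_inj.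
by rewrite (_ : inr @^-1: _ = set0) ?g0 ?addr0 //; apply/setP => y; rewrite !inE memE.
Qed.

Lemma restriction_in_inr (Bt : subspecies) (f : boolfun X) (g : boolfun Y) :
  Bt Y g -> f set0 = 0 -> restriction_in Bt (star1 f g) (inr @: setT).
Proof.
move=> Bg f0; exists Y, g, inr; split => // [|B]; first exact: inr_inj.
rewrite /star1 imsetK; last exact: inr_inj.
by rewrite (_ : inl @^-1: _ = set0) ?f0 ?add0r //; apply/setP => x; rewrite !inE memE.
Qed.

Lemma setC_imset_inl : ~: (inl @: setT) = inr @: setT :> {set X + Y}.
Proof. by rewrite -[inl @: _]setU0 -(imset0 inr) setC_sum setCT setC0 imset0 set0U. Qed.

End SumSets.

Section SplitQuotient.
Variables (Z : finType) (h : boolfun Z) (e : rel Z) (U : {set Z}).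
Hypotheses (splU : splits h U) (ewe : EW h e).

Lemma class_subset_side (C : {set Z}) : C \in classes e -> C \subset U \/ C \subset ~: U.
Proof.
move=> CQ; have h0 := splits_set0 splU.
have /indecomposableP [_ indC] := (EWP h0 ewe.1).1 ewe C CQ.
have splC : splits_on h C (C :&: U).
  move=> A sAC; rewrite setIA (setIidPl sAC) setDIr setDv set0U setIDA (setIidPl sAC).
  by rewrite addrC setDE; apply: splU.
case: (indC _ (subsetIl _ _) splC) => [CU0|/setIidPl]; [right|by left].
by rewrite -disjoints_subset -setI_eq0 CU0.
Qed.

Lemma class_subsetE (C : {set Z}) z : C \in classes e -> z \in C ->
  ((C \subset U) = (z \in U)) * ((C \subset ~: U) = (z \in ~: U)).
Proof.
move=> CQ zC; have [sCU|sCU] := class_subset_side CQ; have zU := subsetP sCU z zC.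
  split; first by rewrite sCU zU.
  by rewrite inE zU; apply/negP => /subsetP/(_ z zC); rewrite inE zU.
split; last by rewrite sCU zU.
move: zU; rewrite inE => /negbTE zU; rewrite zU.
by apply/negP => /subsetP/(_ z zC); rewrite zU.
Qed.

Let bigcup_quotI (W : {set Z}) (A : {set quot e}) :
    (forall (C : quot e) z, z \in val C -> (val C \subset W) = (z \in W)) ->
  (\bigcup_(C in A) val C) :&: W = \bigcup_(C in A :&: [set C : quot e | val C \subset W]) val C.
Proof.
move=> sideW; apply/setP => z; rewrite inE.
apply/andP/bigcupP => [[/bigcupP [C CA zC] zW]|[C /setIP [CA /[!inE] sCW] zC]].
  by exists C; rewrite // !inE CA (sideW C z zC).
by split; [apply/bigcupP; exists C | rewrite -(sideW C z zC)].
Qed.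

Lemma setC_quot_side :
  ~: [set C : quot e | val C \subset U] = [set C : quot e | val C \subset ~: U].
Proof.
apply/setP => C; have [z zC] := set0Pn _ (partition_neq0 (classes_partition ewe.1) (valP C)).
by rewrite !inE !(class_subsetE (valP C) zC) inE.
Qed.

Lemma splits_quot : splits (quot_fun h e) [set C : quot e | val C \subset U].
Proof.
move=> A; rewrite /quot_fun {1}splU setC_quot_side.
by rewrite !bigcup_quotI // => C z zC; rewrite (class_subsetE (valP C) zC).
Qed.

End SplitQuotient.

Definition sum_subspecies (B1 B2 : subspecies) : subspecies :=
  fun Z h => exists U, [/\ splits h U, restriction_in B1 h U & restriction_in B2 h (~: U)].

Section SumSubspecies.
Variables B1 B2 : subspecies.
Hypotheses (B1_conv : convenient B1) (B2_conv : convenient B2).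

Lemma sum_subspecies_star1 (X Y : finType) (f : boolfun X) (g : boolfun Y) :
  B1 f -> B2 g -> sum_subspecies B1 B2 (star1 f g).
Proof.
move=> B1f B2g; have [B1_0 _ _ _ _] := B1_conv; have [B2_0 _ _ _ _] := B2_conv.
have f0 := B1_0 _ _ B1f; have g0 := B2_0 _ _ B2g.
exists (inl @: setT); rewrite setC_imset_inl; split.
- rewrite -[inl @: _]setU0 -(imset0 inr); apply: splits_star1 => A.
    by rewrite setIT setCT setI0 f0 addr0.
  by rewrite setI0 setC0 setIT g0 add0r.
- exact: restriction_in_inl.
- exact: restriction_in_inr.
Qed.

Lemma sum_subspecies_quot (X : finType) (h : boolfun X) (e : rel X) :
    sum_subspecies B1 B2 h -> EW h e ->
  sum_subspecies B1 B2 (quot_fun h e) /\ ic (quot_fun h e) = ic h.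
Proof.
move=> [U [splU R1U R2U]] ewe; have h0 := splits_set0 splU.
have side1 := class_subset_side splU ewe.
have side2 C : C \in classes e -> C \subset ~: U \/ C \subset ~: ~: U.
  by rewrite setCK => /side1 [] ?; [right|left].
have [R1q ic1] := restriction_in_quot B1_conv h0 ewe side1 R1U.
have [R2q ic2] := restriction_in_quot B2_conv h0 ewe side2 R2U.
have splq := splits_quot splU ewe.
rewrite -(setC_quot_side splU ewe) in R2q ic2.
split; first by exists [set C : quot e | val C \subset U].
by rewrite !ic_setT (ic_on_splits splq) (ic_on_splits splU) ic1 ic2.
Qed.

Lemma sum_subspecies_convenient : convenient (sum_subspecies B1 B2).
Proof.
split.
- by move=> X h [U [splU _ _]]; apply: splits_set0 splU.
- move=> X Y s s_bij h [U [splU R1U R2U]]; have s_inj := bij_inj s_bij.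
  exists (s @: U); split.
  + by move=> A; rewrite !preimsetI preimsetC !imsetK.
  + exact: restriction_in_bij.
  + have -> : ~: (s @: U) = s @: (~: U).
      by apply/setP => z; have [s' ss' s's] := s_bij; rewrite -(s's z) inE !mem_imset // inE.
    exact: restriction_in_bij.
- exists set0; split; [by move=> A; rewrite addr0 | exact: restriction_in_void..].
- move=> X Y f g [U [splU R1U R2U]] [V [splV R1V R2V]].
  exists (inl @: U :|: inr @: V); rewrite setC_sum; split.
  + exact: splits_star1.
  + exact: restriction_in_star1.
  + exact: restriction_in_star1.
split.
- move=> X h Y [U [splU R1U R2U]]; exists (val @^-1: U).
  rewrite -preimsetC; split; try exact: restriction_in_sub.
  by move=> A; rewrite -preimsetC !imsetI_preimset.
- by move=> X h e hh ewe; have [] := sum_subspecies_quot hh ewe.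
- move=> X h e hh; split=> [ewe|[] //].
  by have [_ ic_quot] := sum_subspecies_quot hh ewe.
Qed.

End SumSubspecies.

Definition empty_subspecies : subspecies := fun X f => #|X| = 0%N /\ f set0 = 0.

Lemma ic_card0 (X : finType) (f : boolfun X) : #|X| = 0%N -> ic f = 0%N.
Proof.
move=> /card0_eq X0; rewrite /ic; case: pickP => // P /and3P [pP _ _].
suff /eqP -> : P == set0 by rewrite cards0.
by rewrite -partition_set0 (_ : set0 = [set: X]) //; apply/setP => x; move: (X0 x); rewrite !inE.
Qed.

Lemma empty_subspecies_convenient : convenient empty_subspecies.
Proof.
have card_quot (X : finType) (e : rel X) : #|X| = 0%N -> #|quot e| = 0%N.
  move=> /card0_eq X0; apply: eq_card0 => C.
  by have /classesP [x _] := valP C; move: (X0 x); rewrite !inE.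
split.
- by move=> X f [].
- move=> X Y s s_bij f [X0 f0]; split; last by rewrite preimset0.
  by rewrite -(bij_eq_card s_bij).
- by split; [exact: card_void|].
- move=> X Y f g [X0 f0] [Y0 g0]; split; first by rewrite card_sum X0 Y0.
  by rewrite !preimset0 f0 g0 addr0.
split.
- move=> X f Y [/card0_eq X0 f0]; split; last by rewrite imset0.
  by apply: eq_card0 => y; move: (X0 (val y)); rewrite !inE.
- by move=> X f e [X0 f0] _; split; [exact: card_quot | rewrite /quot_fun big_set0].
- move=> X f e [X0 f0]; split=> [ewe|[] //]; split=> //.
  by rewrite !ic_card0 ?card_quot.
Qed.

Definition Bool_max : subspecies :=
  fun X f => exists2 Bt : subspecies, convenient Bt & Bt X f.

Lemma Bool_max_convenient : convenient Bool_max.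
Proof.
split.
- by move=> X f [Bt [Bt0 _ _ _ _]]; apply: Bt0.
- move=> X Y s s_bij f [Bt Bt_conv Btf]; exists Bt => //.
  by case: Bt_conv => _ Bt_bij _ _ _; apply: Bt_bij.
- by exists empty_subspecies; [exact: empty_subspecies_convenient | split; [exact: card_void|]].
- move=> X Y f g [B1 B1_conv B1f] [B2 B2_conv B2g].
  exists (sum_subspecies B1 B2); first exact: sum_subspecies_convenient.
  exact: sum_subspecies_star1.
split.
- move=> X f Y [Bt Bt_conv Btf]; exists Bt => //.
  by case: Bt_conv => _ _ _ _ [Bt_sub _ _]; apply: Bt_sub.
- move=> X f e [Bt Bt_conv Btf] ewe; exists Bt => //.
  by case: Bt_conv => _ _ _ _ [_ Bt_quot _]; apply: Bt_quot.
- by move=> X f e [Bt [_ _ _ _ [_ _ Bt_ES]]]; apply: Bt_ES.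
Qed.

Theorem proposition3p24 :
  exists Bmax : subspecies,
    convenient Bmax /\
    forall Bt : subspecies, convenient Bt ->
      forall (X : finType) (f : boolfun X), Bt X f -> Bmax X f.
Proof.
exists Bool_max; split; first exact: Bool_max_convenient.
by move=> Bt Bt_conv X f Btf; exists Bt.
Qed.
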